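(* Assume $\Phi_0>0$, let $\gamma>1$ and $\tau>0$, and let $C$ be the set of $\tau$-cheap edges. If $F\subseteq E$ is an $r$-edge-cover with $\tau\ge\ell_F(B)$, then $\Phi(C\cap F)\le\Phi_0/\gamma$.
   Context: Bipartite Activation Edge-Multicover setting: a bipartite multigraph $G=(A\cup B,E)$, each edge $e=ab$ ($a\in A$, $b\in B$) with non-negative activation costs $c_e^a,c_e^b$, and non-negative integer requirements $r_b$ for $b\in B$. For $J\subseteq E$, $\delta_J(v)$ is the set of edges of $J$ at $v$, $\deg_J(v)=|\delta_J(v)|$, $\ell_J(v)=\max\{c_e^v:e\in\delta_J(v)\}$ ($0$ if empty), $\ell_J(U)=\sum_{v\in U}\ell_J(v)$; $J$ is an $r$-edge-cover if $\deg_J(b)\ge r_b$ for all $b\in B$. For $b\in B$, $w_b$ is the $r_b$-th smallest value $c_e^b$ over edges $e\in E$ incident to $b$ (with multiplicity), $w_b=0$ if $r_b=0$. $\Phi(J)=\sum_{b\in B}w_b\max\{r_b-\deg_J(b),0\}$ and $\Phi_0=\Phi(\emptyset)=\sum_{b\in B}w_br_b$. Given $\gamma$ and $\tau$, an edge $e$ incident to $b\in B$ is $\tau$-cheap if $c_e^b\le\gamma\tau\cdot\frac{w_br_b}{\Phi_0}$; $C=\bigcup_{b\in B}\{e\in\delta_E(b): c_e^b\le\gamma\tau\, w_br_b/\Phi_0\}$. *)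

From HB Require Import structures.
From mathcomp Require Import all_boot all_order all_algebra.
Set Implicit Arguments. Unset Strict Implicit. Unset Printing Implicit Defensive.
Import Order.TTheory GRing.Theory Num.Theory.
Local Open Scope ring_scope.

(* A bipartite multigraph G = (A ∪ B, E): E is a finite type of edges,
   each edge e has endpoint ea e ∈ A and eb e ∈ B.  Costs ca e = c_e^a,
   cb e = c_e^b. *)
Section Defs.
Variables (R : realFieldType) (A B E : finType)
  (ea : E -> A) (eb : E -> B) (cb : E -> R) (r : B -> nat).

Definition deltaB (J : {set E}) (b : B) : {set E} := [set e in J | eb e == b].
Definition degB (J : {set E}) (b : B) : nat := #|deltaB J b|.

(* ell_J(b) = max { c_e^b : e ∈ delta_J(b) }, 0 if empty
   (costs are nonnegative, so max with base 0 is the right value) *)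
Definition ellB (J : {set E}) (b : B) : R :=
  \big[Num.max/0]_(e in deltaB J b) cb e.
Definition ellBset (J : {set E}) : R := \sum_(b : B) ellB J b.

(* w_b: the r_b-th smallest value of c_e^b over edges incident to b
   (with multiplicity); 0 if r_b = 0. *)
Definition wB (b : B) : R :=
  if r b is k.+1 then
    nth 0 (sort <=%R [seq cb e | e <- enum E & eb e == b]) k
  else 0.

(* Phi(J) = sum_b w_b max{r_b - deg_J(b), 0} (truncated nat subtraction) *)
Definition Phi (J : {set E}) : R := \sum_(b : B) wB b * ((r b - degB J b)%N)%:R.
Definition Phi0 : R := Phi set0.

Definition is_r_edge_cover (J : {set E}) : Prop := forall b, (r b <= degB J b)%N.

Definition cheapEdges (gamma tau : R) : {set E} :=
  [set e | cb e <= gamma * tau * (wB (eb e) * (r (eb e))%:R) / Phi0].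
End Defs.

From HB Require Import structures.
From mathcomp Require Import all_boot all_order all_algebra.
From mathcomp Require Import ring.
Import Order.TTheory GRing.Theory Num.Theory.
Local Open Scope ring_scope.

(* Write k = Phi0 / (gamma * tau).  The theorem is summed from a
   bound on each vertex b of B:
       w_b * max(r_b - deg_{C∩F}(b), 0) <= ell_F(b) * k.
   If b has no deficit in C ∩ F the left side is 0.  Otherwise, since F
   covers b, some edge e of delta_F(b) is not tau-cheap; this means
   gamma * tau * w_b * r_b / Phi0 < c_e^b <= ell_F(b), i.e.
   w_b * r_b <= ell_F(b) * k, and the deficit is at most r_b.
   Summing over B gives Phi(C ∩ F) <= ell_F(B) * k <= tau * k = Phi0 / gamma. *)

Section Bounds.
Variables (R : realFieldType) (B E : finType) (eb : E -> B) (cb : E -> R)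
  (r : B -> nat).
Hypothesis cb_ge0 : forall e, 0 <= cb e.

(* w_b is one of the (nonnegative) costs c_e^b, or 0. *)
Lemma wB_ge0 (b : B) : 0 <= wB eb cb r b.
Proof.
rewrite /wB; case: (r b) => // n.
set s := sort _ _.
have [n_lt|n_ge] := ltnP n (size s); last by rewrite nth_default.
have : nth 0 s n \in s by rewrite mem_nth.
by rewrite mem_sort => /mapP [e _ ->].
Qed.

Lemma ellB_ge0 (J : {set E}) (b : B) : 0 <= ellB eb cb J b.
Proof.
rewrite /ellB; elim/big_ind: _ => // x y x_ge0 y_ge0.
by rewrite le_max x_ge0.
Qed.

Lemma cb_le_ellB (J : {set E}) (b : B) (e : E) :
  e \in deltaB eb J b -> cb e <= ellB eb cb J b.
Proof. by move=> eJb; rewrite /ellB (bigD1 e) //= le_max lexx. Qed.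

End Bounds.

Lemma deficit_edge {B E : finType} {eb : E -> B} {r : B -> nat}
    {S J : {set E}} {b : B} :
  (r b <= degB eb J b)%N -> (degB eb (S :&: J) b < r b)%N ->
  exists2 e, e \in deltaB eb J b & e \notin S.
Proof.
move=> J_cov SJ_def.
have : ~~ (deltaB eb J b \subset deltaB eb (S :&: J) b).
  apply/negP => /subset_leq_card le_deg.
  by move: (leq_trans J_cov le_deg); rewrite leqNgt SJ_def.
case/subsetPn => e eJb eNSJb; exists e => //.
apply: contra eNSJb => eS; move: eJb; rewrite !inE => /andP [eJ ->].
by rewrite eS eJ.
Qed.

Section CheapEdges.
Variables (R : realFieldType) (B E : finType) (eb : E -> B) (cb : E -> R)
  (r : B -> nat) (gamma tau : R) (F : {set E}).
Hypothesis cb_ge0 : forall e, 0 <= cb e.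
Hypothesis Phi0_gt0 : 0 < Phi0 eb cb r.
Hypothesis gamma_gt0 : 0 < gamma.
Hypothesis tau_gt0 : 0 < tau.
Hypothesis F_cover : is_r_edge_cover eb r F.

Let k : R := Phi0 eb cb r / (gamma * tau).
Let C : {set E} := cheapEdges eb cb r gamma tau.

Lemma scale_gt0 : 0 < k.
Proof. by rewrite /k divr_gt0 // mulr_gt0. Qed.

Lemma expensive_edge_bound {e : E} :
  e \notin C -> wB eb cb r (eb e) * (r (eb e))%:R <= cb e * k.
Proof.
rewrite inE -ltNge => /ltW cheap_lt.
have -> : wB eb cb r (eb e) * (r (eb e))%:R
          = gamma * tau * (wB eb cb r (eb e) * (r (eb e))%:R)
            / Phi0 eb cb r * k.
  by rewrite /k; field; rewrite !gt_eqF.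
by rewrite ler_wpM2r // ltW // scale_gt0.
Qed.

Lemma vertex_deficit_bound (b : B) :
  wB eb cb r b * ((r b - degB eb (C :&: F) b)%N)%:R <= ellB eb cb F b * k.
Proof.
have k_ge0 := ltW scale_gt0.
have [no_def|def] := leqP (r b) (degB eb (C :&: F) b).
  by rewrite (eqP (_ : r b - _ == 0)%N) ?subn_eq0 // mulr0 mulr_ge0 ?ellB_ge0.
have [e eFb eNC] := deficit_edge (F_cover b) def.
have ebe : eb e = b by move: eFb; rewrite inE => /andP [_ /eqP].
have deficit_le : wB eb cb r b * ((r b - degB eb (C :&: F) b)%N)%:R
                  <= wB eb cb r b * (r b)%:R.
  by rewrite ler_wpM2l ?wB_ge0 // ler_nat leq_subr.
apply: (le_trans deficit_le); rewrite -ebe.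
apply: le_trans (expensive_edge_bound eNC) _.
by rewrite ler_wpM2r // ebe cb_le_ellB.
Qed.

End CheapEdges.

Theorem mainTheorem10 (R : realFieldType) (A B E : finType)
  (ea : E -> A) (eb : E -> B) (ca cb : E -> R) (r : B -> nat)
  (ca_ge0 : forall e, 0 <= ca e) (cb_ge0 : forall e, 0 <= cb e)
  (gamma tau : R) (F : {set E}) :
  0 < Phi0 eb cb r -> 1 < gamma -> 0 < tau ->
  is_r_edge_cover eb r F ->
  ellBset eb cb F <= tau ->
  Phi eb cb r (cheapEdges eb cb r gamma tau :&: F) <= Phi0 eb cb r / gamma.
Proof.
move=> Phi0_gt0 gamma_gt1 tau_gt0 F_cover ell_le_tau.
have gamma_gt0 : 0 < gamma by apply: lt_trans gamma_gt1.
pose k := Phi0 eb cb r / (gamma * tau).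
have k_gt0 : 0 < k by rewrite divr_gt0 // mulr_gt0.
have sum_bound : Phi eb cb r (cheapEdges eb cb r gamma tau :&: F)
                 <= ellBset eb cb F * k.
  rewrite /Phi /ellBset mulr_suml; apply: ler_sum => b _.
  exact: vertex_deficit_bound.
have -> : Phi0 eb cb r / gamma = tau * k.
  by rewrite /k; field; rewrite !gt_eqF.
by apply: (le_trans sum_bound); rewrite ler_wpM2r // ltW.
Qed.
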